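(* Let $\omega\in S_n$ avoid the pattern $231$. Then for any $i\neq j$ with $c_i(\omega),c_j(\omega)>0$, every element of $C_i(\omega)$ is incomparable with every element of $C_j(\omega)$; consequently $M_\omega$ is a disjoint union of the chains $C_i(\omega)$.
   Context: Permutations $\omega\in S_n$ are written in one-line notation. Let ${\rm Inv}(\omega)=\{(i,j): 1\le i<j\le n,\ \omega(i)>\omega(j)\}$, $c_i(\omega)=\#\{j: i<j\le n,\ \omega(i)>\omega(j)\}$, and for $i<j$, $c_{i,j}(\omega)=\#\{k: i<k<j,\ \omega(i)>\omega(k)\}$; $[m]=\{1,\dots,m\}$. For $i$ with $c_i(\omega)>0$ and $x\in[c_i(\omega)]$, $m_{i,x}(\omega)\in\mathbb{N}^n$ has $j$-th coordinate $0$ if $j<i$; $x$ if $j=i$; $0$ if $j>i$ and $(i,j)\in{\rm Inv}(\omega)$; $\max\{0,x-c_{i,j}(\omega)\}$ if $j>i$ and $(i,j)\notin{\rm Inv}(\omega)$. $M_\omega$ is the set of all $m_{i,x}(\omega)$ with the product order on $\mathbb{N}^n$, and $C_i(\omega)=\{m_{i,x}(\omega): x\in[c_i(\omega)]\}$ (a chain). $\omega$ avoids $231$ if there are no $i<j<l$ with $\omega(l)<\omega(i)<\omega(j)$. *)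

(* Permutations of 'I_n (0-based positions/values). *)
From mathcomp Require Import all_boot all_order all_fingroup.
Set Implicit Arguments. Unset Strict Implicit. Unset Printing Implicit Defensive.

Definition natvec (n : nat) := {ffun 'I_n -> nat}.

Definition vle n (a b : natvec n) : bool := [forall k, a k <= b k].

Definition incomparable n (a b : natvec n) : bool := ~~ vle a b && ~~ vle b a.

Definition is_inv n (w : 'S_n) (i j : 'I_n) : bool := (i < j) && (w j < w i).

Definition cc n (w : 'S_n) (i : 'I_n) : nat := #|[set j | is_inv w i j]|.

Definition cij n (w : 'S_n) (i j : 'I_n) : nat :=
  #|[set k : 'I_n | (i < k) && (k < j) && (w k < w i)]|.

(* m_{i,x}(w); note (x - c) in nat is max{0, x - c}. *)
Definition mvec n (w : 'S_n) (i : 'I_n) (x : nat) : natvec n :=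
  [ffun j : 'I_n =>
     if j < i then 0
     else if j == i then x
     else if is_inv w i j then 0
     else x - cij w i j].

Definition Cchain n (w : 'S_n) (i : 'I_n) : seq (natvec n) :=
  [seq mvec w i x | x <- iota 1 (cc w i)].

Definition Mset n (w : 'S_n) : seq (natvec n) :=
  flatten [seq Cchain w i | i <- enum 'I_n].

Definition avoids231 n (w : 'S_n) : bool :=
  ~~ [exists i : 'I_n, exists j : 'I_n, exists l : 'I_n,
        [&& i < j, j < l, w l < w i & w i < w j]].

From mathcomp Require Import all_boot all_order all_fingroup.

Set Implicit Arguments.
Unset Strict Implicit.
Unset Printing Implicit Defensive.

(* The heart
   of the proof is that 231-avoidance also kills the remaining coordinates
   j > i with w(i) < w(j): every k > i with w(k) < w(i) must occur before j
   (otherwise i < j < k is a 231 pattern), so c_{i,j}(w) >= c_i(w) >= x and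
   max{0, x - c_{i,j}(w)} = 0.  Hence for x in [c_i(w)] the vector m_{i,x}(w)
   is x times the i-th unit vector.

   Consequently, for i < j, an element of C_i(w) is positive at i where an
   element of C_j(w) is zero, and vice versa at j: they are incomparable.
   Each C_i(w) is a chain because m_{i,x}(w) is monotone in x, and M_w is
   the disjoint union of the C_i(w) since an element lying in two chains
   would be incomparable with itself. *)

Lemma incomparable_witness n (a b : natvec n) (k l : 'I_n) :
  b k < a k -> a l < b l -> incomparable a b.
Proof.
move=> ba_k ab_l; apply/andP; split; apply/negP => /forallP le_ab.
- by have := le_ab k; rewrite leqNgt ba_k.
- by have := le_ab l; rewrite leqNgt ab_l.
Qed.

Lemma incomparable_sym n (a b : natvec n) :
  incomparable a b = incomparable b a.
Proof. by rewrite /incomparable andbC. Qed.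

Lemma vle_refl n (a : natvec n) : vle a a.
Proof. exact/forallP. Qed.

Lemma mem_Cchain n (w : 'S_n) (i : 'I_n) a :
  a \in Cchain w i -> exists2 x, 0 < x <= cc w i & a = mvec w i x.
Proof. by case/mapP => x; rewrite mem_iota add1n ltnS => x_range ->; exists x. Qed.

Section MVectors.

Variables (n : nat) (w : 'S_n).

Lemma mvec_diag (i : 'I_n) x : mvec w i x i = x.
Proof. by rewrite ffunE ltnn eqxx. Qed.

Lemma mvec_before (i j : 'I_n) x : j < i -> mvec w i x j = 0.
Proof. by move=> lt_ji; rewrite ffunE lt_ji. Qed.

Lemma mvec_monotone (i : 'I_n) x y : x <= y -> vle (mvec w i x) (mvec w i y).
Proof.
move=> le_xy; apply/forallP => k; rewrite !ffunE.
case: (k < i) => //; case: (k == i) => //; case: (is_inv w i k) => //.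
exact: leq_sub2r.
Qed.

Hypothesis w_avoids : avoids231 w.

Lemma cc_le_cij (i j : 'I_n) :
  i < j -> w i < w j -> cc w i <= cij w i j.
Proof.
move=> lt_ij lt_wij; apply: subset_leq_card; apply/subsetP => k.
rewrite !inE /is_inv => /andP [lt_ik lt_wki]; rewrite lt_ik lt_wki andbT /=.
rewrite ltnNge; apply/negP => le_jk.
have lt_jk : j < k.
  rewrite ltn_neqAle le_jk andbT; apply/eqP => eq_jk.
  by move: lt_wki; rewrite -(val_inj eq_jk) ltnNge ltnW.
move/negP: w_avoids; apply; apply/existsP; exists i; apply/existsP; exists j.
by apply/existsP; exists k; rewrite lt_ij lt_jk lt_wki lt_wij.
Qed.

Lemma mvec_after (i j : 'I_n) x :
  i < j -> x <= cc w i -> mvec w i x j = 0.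
Proof.
move=> lt_ij le_xc; rewrite ffunE ltnNge (ltnW lt_ij) /=.
have -> : (j == i) = false by apply/negbTE; rewrite neq_ltn lt_ij orbT.
case inv_ij: (is_inv w i j) => //; apply/eqP; rewrite subn_eq0.
have lt_wij : w i < w j.
  move: inv_ij; rewrite /is_inv lt_ij /= ltnNge leq_eqVlt => /negbFE /orP [|//].
  by move=> /eqP /val_inj /perm_inj eq_ji; move: lt_ij; rewrite eq_ji ltnn.
exact: leq_trans le_xc (cc_le_cij lt_ij lt_wij).
Qed.

Lemma Cchain_incomparable (i j : 'I_n) a b :
  i != j -> a \in Cchain w i -> b \in Cchain w j -> incomparable a b.
Proof.
wlog lt_ij : i j a b / i < j.
  move=> wlog_lt ne_ij a_i b_j; case: (ltngtP i j) => [lt_ij|lt_ji|eq_ij].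
  - exact: wlog_lt lt_ij ne_ij a_i b_j.
  - by rewrite incomparable_sym (wlog_lt j i) // eq_sym.
  - by move: ne_ij; rewrite (val_inj eq_ij) eqxx.
move=> _ /mem_Cchain [x /andP [x_pos le_xc] ->] /mem_Cchain [y /andP [y_pos _] ->].
apply: (incomparable_witness (k := i) (l := j)).
- by rewrite mvec_before // mvec_diag.
- by rewrite mvec_after // mvec_diag.
Qed.

End MVectors.

Theorem mainTheorem2 (n : nat) (w : 'S_n) :
  avoids231 w ->
  (* elements of distinct chains are incomparable *)
  (forall i j : 'I_n, i != j -> 0 < cc w i -> 0 < cc w j ->
     forall a b, a \in Cchain w i -> b \in Cchain w j -> incomparable a b) /\
  (* consequently M_w is a disjoint union of the chains C_i(w):
     every element of M_w lies in exactly one C_i(w), and each C_i(w) is a chain *)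
  (forall a, a \in Mset w -> exists! i : 'I_n, a \in Cchain w i) /\
  (forall i : 'I_n, forall a b, a \in Cchain w i -> b \in Cchain w i ->
      vle a b || vle b a).
Proof.
move=> w_avoids; split; last split.
- by move=> i j ne_ij _ _ a b; apply: Cchain_incomparable.
- move=> a /flatten_mapP [i _ a_i]; exists i; split => // j a_j.
  apply/eqP; apply: contraT => ne_ij.
  have := Cchain_incomparable w_avoids ne_ij a_i a_j.
  by rewrite /incomparable vle_refl.
- move=> i a b /mem_Cchain [x _ ->] /mem_Cchain [y _ ->].
  case: (leqP x y) => [le_xy|/ltnW le_yx].
  + by rewrite (mvec_monotone _ _ le_xy).
  + by rewrite (mvec_monotone _ _ le_yx) orbT.
Qed.
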